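(* Let $\mathbb{G}$ be a finite quantum group. Suppose that $\alpha:C(\mathbb{G})\to C(\mathbb{G})\otimes\mathcal{O}(\mathbb{H})$ is an action of a compact quantum group $\mathbb{H}$ on $C(\mathbb{G})$ such that for every functional $\omega\in C(\mathbb{G})^*$ we have $(L_\omega\otimes\mathrm{id}_{\mathcal{O}(\mathbb{H})})\circ\alpha=\alpha\circ L_\omega$. Then there exists a unique Hopf $*$-morphism $\gamma:\mathcal{O}(\mathbb{G})\to\mathcal{O}(\mathbb{H})$ such that $(\mathrm{id}_{\mathcal{O}(\mathbb{G})}\otimes\gamma)\circ\Delta_{\mathbb{G}}=\alpha$.
   Context: $\mathcal{O}(\mathbb{G})=C(\mathbb{G})$ is the finite-dimensional Hopf $*$-algebra of $\mathbb{G}$ with comultiplication $\Delta_{\mathbb{G}}$. For $\omega\in C(\mathbb{G})^*$, $L_\omega=(\omega\otimes\mathrm{id})\circ\Delta_{\mathbb{G}}:C(\mathbb{G})\to C(\mathbb{G})$. An action of a compact quantum group $\mathbb{H}$ (with CQG Hopf $*$-algebra $\mathcal{O}(\mathbb{H})$, comultiplication $\Delta_{\mathbb{H}}$) on $C(\mathbb{G})$ is an injective unital $*$-homomorphism $\alpha:C(\mathbb{G})\to C(\mathbb{G})\otimes\mathcal{O}(\mathbb{H})$ with $(\alpha\otimes\mathrm{id})\alpha=(\mathrm{id}\otimes\Delta_{\mathbb{H}})\alpha$. *)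

(* Finite quantum groups / CQG Hopf *-algebras encoded
   concretely by coordinates: every complex vector space is modelled as the
   free vector space {malg CC[K]} on a basis K (multinomials' monalg), so that
   algebraic tensor products are free vector spaces on products of bases. *)
From HB Require Import structures.
From mathcomp Require Import all_boot all_order all_algebra.
From mathcomp Require Import finmap.
From mathcomp.multinomials Require Import monalg.
From mathcomp.real_closed Require Import complex.
From mathcomp.reals_stdlib Require Import Rstruct.

Set Implicit Arguments.
Unset Strict Implicit.
Unset Printing Implicit Defensive.

Import GRing.Theory Num.Theory.
Local Open Scope ring_scope.

Notation CC := (complex Rdefinitions.R).

Notation V K := {malg CC[K]}.

Definition bv {K : choiceType} (k : K) : V K := << k >>.

Definition lext {K : choiceType} {W : lmodType CC} (f : K -> W) (x : V K) : W :=
  \sum_(k <- msupp x) x@_k *: f k.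

Definition lfun {K : choiceType} (f : K -> CC) (x : V K) : CC :=
  \sum_(k <- msupp x) x@_k * f k.

Definition tens {K L : choiceType} (x : V K) (y : V L) : V (K * L)%type :=
  \sum_(k <- msupp x) \sum_(l <- msupp y) << x@_k * y@_l *g (k, l) >>.

Definition tmap {K L K' L' : choiceType} (f : V K -> V K') (g : V L -> V L')
  : V (K * L)%type -> V (K' * L')%type :=
  lext (fun p : K * L => tens (f (bv p.1)) (g (bv p.2))).

Definition assoc3 {K L M : choiceType} : V ((K * L) * M)%type -> V (K * (L * M))%type :=
  lext (fun p : (K * L) * M => bv (p.1.1, (p.1.2, p.2))).

Record salg (K : choiceType) := SAlg {
  smul : K -> K -> V K;
  sone : V K;
  sstar : K -> V K
}.

Definition amul {K : choiceType} (A : salg K) (x y : V K) : V K :=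
  lext (fun k => lext (fun l => smul A k l) y) x.

Definition astar {K : choiceType} (A : salg K) (x : V K) : V K :=
  \sum_(k <- msupp x) conjc (x@_k) *: sstar A k.

Definition tsalg {K L : choiceType} (A : salg K) (B : salg L) : salg (K * L)%type :=
  SAlg (fun p q : K * L => tens (smul A p.1 q.1) (smul B p.2 q.2))
       (tens (sone A) (sone B))
       (fun p : K * L => tens (sstar A p.1) (sstar B p.2)).

Definition is_star_alg {K : choiceType} (A : salg K) : Prop :=
  [/\ forall x y z, amul A (amul A x y) z = amul A x (amul A y z),
      forall x, amul A (sone A) x = x,
      forall x, amul A x (sone A) = x,
      forall x, astar A (astar A x) = x &
      forall x y, astar A (amul A x y) = amul A (astar A y) (astar A x)].

Definition is_star_hom {K L : choiceType} (A : salg K) (B : salg L)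
  (F : V K -> V L) : Prop :=
  [/\ forall x y, F (amul A x y) = amul B (F x) (F y),
      F (sone A) = sone B &
      forall x, F (astar A x) = astar B (F x)].

Record hopf (K : choiceType) := Hopf {
  halg : salg K;
  hcomul : K -> V (K * K)%type;
  hcounit : K -> CC;
  hanti : K -> V K
}.

Definition comul {K : choiceType} (H : hopf K) : V K -> V (K * K)%type :=
  lext (hcomul H).
Definition counit {K : choiceType} (H : hopf K) : V K -> CC :=
  lfun (hcounit H).
Definition antipode {K : choiceType} (H : hopf K) : V K -> V K :=
  lext (hanti H).

Definition is_hopf_star_alg {K : choiceType} (H : hopf K) : Prop :=
  is_star_alg (halg H) /\
  [/\
      is_star_hom (halg H) (tsalg (halg H) (halg H)) (comul H),
      ((forall x y, counit H (amul (halg H) x y) = counit H x * counit H y)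
        /\ counit H (sone (halg H)) = 1),
      (forall x, assoc3 (tmap (comul H) id (comul H x)) = tmap id (comul H) (comul H x)),
      (forall x, lext (fun p : K * K => hcounit H p.1 *: bv p.2) (comul H x) = x
        /\ lext (fun p : K * K => hcounit H p.2 *: bv p.1) (comul H x) = x) &
      (forall x,
        lext (fun p : K * K => amul (halg H) (hanti H p.1) (bv p.2)) (comul H x)
          = counit H x *: sone (halg H)
        /\ lext (fun p : K * K => amul (halg H) (bv p.1) (hanti H p.2)) (comul H x)
          = counit H x *: sone (halg H))].

(* a C*-norm on the *-algebra A (complex-valued but nonnegative, i.e. real) *)
Definition is_Cstar_norm {K : choiceType} (A : salg K) (N : V K -> CC) : Prop :=
  (forall x, 0 <= N x) /\
  [/\ forall x, N x = 0 -> x = 0,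
      forall x y, N (x + y) <= N x + N y,
      forall (c : CC) x, N (c *: x) = `|c| * N x,
      forall x y, N (amul A x y) <= N x * N y &
      forall x, N (amul A (astar A x) x) = N x ^+ 2].

(* A
   finite-dimensional normed space is complete, so a C*-norm makes it a
   C*-algebra. *)
Definition finite_quantum_group (n : nat) (G : hopf 'I_n) : Prop :=
  is_hopf_star_alg G /\ exists N : V 'I_n -> CC, is_Cstar_norm (halg G) N.

Definition unitary_corep {I : choiceType} (H : hopf I) (d : nat) (u : 'M[V I]_d) : Prop :=
  [/\ forall i j, comul H (u i j) = \sum_(k < d) tens (u i k) (u k j),
      forall i j, \sum_(k < d) amul (halg H) (astar (halg H) (u k i)) (u k j)
                    = (i == j)%:R *: sone (halg H) &
      forall i j, \sum_(k < d) amul (halg H) (u i k) (astar (halg H) (u j k))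
                    = (i == j)%:R *: sone (halg H)].

(* CQG Hopf *-algebra (Dijkhuizen--Koornwinder): a Hopf *-algebra spanned by
   the matrix coefficients of its finite-dimensional unitary corepresentations. *)
Definition cqg_hopf_alg {I : choiceType} (H : hopf I) : Prop :=
  is_hopf_star_alg H /\
  forall a : V I, exists (d : nat) (u : 'M[V I]_d) (c : 'M[CC]_d),
    unitary_corep H u /\ a = \sum_(i < d) \sum_(j < d) c i j *: u i j.

Definition is_action (n : nat) (G : hopf 'I_n) {I : choiceType} (H : hopf I)
  (al : 'I_n -> V ('I_n * I)%type) : Prop :=
  [/\ injective (lext al),
      is_star_hom (halg G) (tsalg (halg G) (halg H)) (lext al) &
      forall x, assoc3 (tmap (lext al) id (lext al x)) = tmap id (comul H) (lext al x)].

(* L_omega = (omega (x) id) o Delta_G, for the functional omega with values w on the basis *)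
Definition Lw (n : nat) (G : hopf 'I_n) (w : 'I_n -> CC) : V 'I_n -> V 'I_n :=
  fun x => lext (fun p : 'I_n * 'I_n => w p.1 *: bv p.2) (comul G x).

Definition is_hopf_star_morph {K L : choiceType} (G : hopf K) (H : hopf L)
  (g : K -> V L) : Prop :=
  is_star_hom (halg G) (halg H) (lext g) /\
  forall x, comul H (lext g x) = tmap (lext g) (lext g) (comul G x).

(* Put gamma := (eps (x) id) o alpha.  Slicing with a functional w, the
   L_w-equivariance of alpha together with eps o L_w = w gives
   (w (x) id)(id (x) gamma)Delta = (w (x) id)alpha, and such slices separate
   points, so (id (x) gamma)Delta = alpha.  The counit of a Hopf *-algebra is a
   *-character, hence eps (x) id is a unital *-homomorphism and so is gamma.
   Applying eps (x) id (x) id to the coassociativity of the action yields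
   Delta_H gamma = (gamma (x) gamma) Delta_G.  Conversely, by the counit property
   any gamma' with (id (x) gamma')Delta = alpha equals (eps (x) id) alpha. *)

From HB Require Import structures.
From mathcomp Require Import all_boot all_order all_algebra.
From mathcomp Require Import finmap.
From mathcomp.multinomials Require Import monalg.
From mathcomp.real_closed Require Import complex.
From mathcomp.reals_stdlib Require Import Rstruct.
From Stdlib Require Import FunctionalExtensionality.

Import GRing.Theory Num.Theory.
Local Open Scope ring_scope.

Notation antilinear f := (linear_for (conjc \; *:%R) f).

Section FreeVectorSpace.
Context {K : choiceType} {W : lmodType CC}.
Implicit Types (f : K -> W) (x : V K).

Lemma bvZ (c : CC) (k : K) : << c *g k >> = c *: bv k.
Proof. by apply/malgP => j; rewrite mcoeffZ !mcoeffU mulr_natr. Qed.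

Lemma lext_bv f k : lext f (bv k) = f k.
Proof. by rewrite /lext /bv msuppU oner_eq0 big_seq_fset1 mcoeffUU scale1r. Qed.

Lemma eq_lext f g x : f =1 g -> lext f x = lext g x.
Proof. by move=> fg; apply: eq_bigr => k _; rewrite fg. Qed.

Lemma lext_comb (a : CC) f g x :
  lext (fun k => a *: f k + g k) x = a *: lext f x + lext g x.
Proof.
rewrite /lext scaler_sumr -big_split /=; apply: eq_bigr => k _.
by rewrite scalerDr !scalerA mulrC.
Qed.

Lemma linear_sum_msupp (nu : {rmorphism CC -> CC}) f :
  linear_for (nu \; *:%R) (fun x => \sum_(k <- msupp x) nu x@_k *: f k).
Proof.
move=> a x y /=.
have widen z (d : {fset K}) : (msupp z `<=` d)%fset ->
    \sum_(k <- msupp z) nu z@_k *: f k = \sum_(k <- d) nu z@_k *: f k.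
  move=> sub; rewrite (big_fset_incl _ sub) //= => k _ /mcoeff_outdom ->.
  by rewrite rmorph0 scale0r.
set d := (msupp x `|` msupp y `|` msupp (a *: x + y))%fset.
have sx : (msupp x `<=` d)%fset by rewrite /d -fsetUA fsubsetUl.
have sy : (msupp y `<=` d)%fset by rewrite /d fsetUAC fsubsetUr.
have sxy : (msupp (a *: x + y) `<=` d)%fset by rewrite /d fsubsetUr.
rewrite (widen _ _ sx) (widen _ _ sy) (widen _ _ sxy).
rewrite scaler_sumr -big_split /=; apply: eq_bigr => k _.
by rewrite mcoeffD mcoeffZ rmorphD rmorphM scalerDl scalerA.
Qed.

Lemma linear_lext f : linear (lext f).
Proof. exact: (linear_sum_msupp idfun). Qed.

Lemma linear_for_eq_bv (s : GRing.Scale.law CC W) (F G : V K -> W) :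
  linear_for s F -> linear_for s G -> (forall k, F (bv k) = G (bv k)) -> F =1 G.
Proof.
have expand (L : V K -> W) : linear_for s L -> forall x,
    L x = \sum_(k <- msupp x) s x@_k (L (bv k)).
  move=> linL x; have [LZ LD] := GRing.semilinear_linear linL.
  have L0 : L 0 = 0 by rewrite -(subrr (0 : V K)) (GRing.zmod_morphism_linear linL) subrr.
  rewrite {1}(monalgE x) (big_morph L LD L0).
  by apply: eq_bigr => k _; rewrite bvZ LZ.
by move=> linF linG FG x; rewrite !expand //; apply: eq_bigr => k _; rewrite FG.
Qed.

Lemma linear_eq_bv (F G : V K -> W) :
  linear F -> linear G -> (forall k, F (bv k) = G (bv k)) -> F =1 G.
Proof. exact: linear_for_eq_bv. Qed.

Lemma antilinear_eq_bv (F G : V K -> W) :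
  antilinear F -> antilinear G -> (forall k, F (bv k) = G (bv k)) -> F =1 G.
Proof. exact: linear_for_eq_bv. Qed.

Lemma linear_scale {F : V K -> W} :
  linear F -> forall a x, F (a *: x) = a *: F x.
Proof. exact: GRing.scalable_linear. Qed.

Lemma antilinear_scale {F : V K -> W} :
  antilinear F -> forall a x, F (a *: x) = conjc a *: F x.
Proof. exact: GRing.scalable_linear. Qed.

End FreeVectorSpace.

Lemma lext_comp {K L : choiceType} {W : lmodType CC} (F : V L -> W) (f : K -> V L) x :
  linear F -> F (lext f x) = lext (F \o f) x.
Proof.
move=> linF; apply: (@linear_eq_bv _ _ (F \o lext f)) => [a y z||k] /=.
- by rewrite linear_lext linF.
- exact: linear_lext.
- by rewrite !lext_bv.
Qed.

Lemma astar_bv {K : choiceType} (A : salg K) k : astar A (bv k) = sstar A k.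
Proof. by rewrite /astar /bv msuppU oner_eq0 big_seq_fset1 mcoeffUU rmorph1 scale1r. Qed.

Lemma antilinear_astar {K : choiceType} (A : salg K) : antilinear (astar A).
Proof. exact: (linear_sum_msupp conjc). Qed.

Section Functionals.
Context {K : choiceType}.
Implicit Types (w : K -> CC) (x : V K).

Lemma lfun_bv w k : lfun w (bv k) = w k.
Proof. exact: (lext_bv (W := CC^o)). Qed.

Lemma linear_lfun w : linear (lfun w : V K -> CC^o).
Proof. exact: (linear_lext (W := CC^o)). Qed.

Lemma eq_lfun w1 w2 x : w1 =1 w2 -> lfun w1 x = lfun w2 x.
Proof. exact: (eq_lext (W := CC^o)). Qed.

End Functionals.

Lemma lfun_lext {K L : choiceType} (w : L -> CC) (f : K -> V L) x :
  lfun w (lext f x) = lfun (fun k => lfun w (f k)) x.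
Proof. by rewrite (lext_comp (W := CC^o) _ _ _ (linear_lfun w)). Qed.

Lemma linear_for_comp {K L : choiceType} {W : lmodType CC} (s : CC -> W -> W)
    (F : V L -> W) (G : V K -> V L) :
  linear_for s F -> linear G -> linear_for s (F \o G).
Proof. by move=> linF linG a x y /=; rewrite linG linF. Qed.

Section Bilinear.
Context {K L : choiceType} {W : lmodType CC}.

Definition bilext (F : K -> L -> W) (x : V K) (y : V L) : W :=
  lext (fun k => lext (F k) y) x.

Lemma bilext_bv F k l : bilext F (bv k) (bv l) = F k l.
Proof. by rewrite /bilext !lext_bv. Qed.

Lemma linear_bilext_l F y : linear (bilext F ^~ y).
Proof. exact: linear_lext. Qed.

Lemma linear_bilext_r F x : linear (bilext F x).
Proof.
move=> a y z; rewrite /bilext -lext_comb; apply: eq_lext => k.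
exact: linear_lext.
Qed.

Lemma bilinear_eq_bv (B1 B2 : V K -> V L -> W) :
  (forall y, linear (B1 ^~ y)) -> (forall x, linear (B1 x)) ->
  (forall y, linear (B2 ^~ y)) -> (forall x, linear (B2 x)) ->
  (forall k l, B1 (bv k) (bv l) = B2 (bv k) (bv l)) -> forall x y, B1 x y = B2 x y.
Proof.
move=> lin1l lin1r lin2l lin2r B12 x y.
apply: (@linear_eq_bv _ _ (B1 ^~ y) (B2 ^~ y)) => // k.
exact: linear_eq_bv.
Qed.

End Bilinear.

Section Tensor.
Context {K L : choiceType}.

Lemma tensE (x : V K) (y : V L) : tens x y = bilext (fun k l => bv (k, l)) x y.
Proof.
apply: eq_bigr => k _; rewrite scaler_sumr.
by apply: eq_bigr => l _; rewrite bvZ scalerA.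
Qed.

Lemma tens_bv (k : K) (l : L) : tens (bv k) (bv l) = bv (k, l).
Proof. by rewrite tensE bilext_bv. Qed.

Lemma linear_tens_l (y : V L) : linear (tens ^~ y : V K -> _).
Proof. by move=> a x z; rewrite !tensE linear_bilext_l. Qed.

Lemma linear_tens_r (x : V K) : linear (tens x : V L -> _).
Proof. by move=> a y z; rewrite !tensE linear_bilext_r. Qed.

End Tensor.

Section TensorMap.
Context {K L K' L' : choiceType} (f : V K -> V K') (g : V L -> V L').

Lemma tmap_bv k l : tmap f g (bv (k, l)) = tens (f (bv k)) (g (bv l)).
Proof. exact: lext_bv. Qed.

Lemma linear_tmap : linear (tmap f g).
Proof. exact: linear_lext. Qed.

Lemma tmap_tens x y : linear f -> linear g -> tmap f g (tens x y) = tens (f x) (g y).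
Proof.
move=> linf ling; move: x y; apply: bilinear_eq_bv => [y|x|y|x|k l].
- exact: linear_for_comp linear_tmap (linear_tens_l _).
- exact: linear_for_comp linear_tmap (linear_tens_r _).
- exact: linear_for_comp (linear_tens_l _) linf.
- exact: linear_for_comp (linear_tens_r _) ling.
- by rewrite tens_bv tmap_bv.
Qed.

End TensorMap.

Lemma linear_assoc3 {K L M : choiceType} : linear (@assoc3 K L M).
Proof. exact: linear_lext. Qed.

Lemma assoc3_tens {K L M : choiceType} (x : V K) (y : V L) (z : V M) :
  assoc3 (tens (tens x y) z) = tens x (tens y z).
Proof.
move: x y; apply: bilinear_eq_bv => [y a u v|x a u v|y|x a u v|k l] /=.
- by rewrite !linear_tens_l linear_assoc3.
- by rewrite linear_tens_r linear_tens_l linear_assoc3.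
- exact: linear_tens_l.
- by rewrite linear_tens_l linear_tens_r.
rewrite tens_bv; move: z; apply: linear_eq_bv => [a u v||m] /=.
- by rewrite linear_tens_r linear_assoc3.
- by move=> a u v; rewrite !linear_tens_r.
- by rewrite !tens_bv /assoc3 lext_bv.
Qed.

Section Slices.
Context {K L : choiceType}.

Definition lslice (w : K -> CC) : V (K * L)%type -> V L :=
  lext (fun p : K * L => w p.1 *: bv p.2).

Definition rslice (w : L -> CC) : V (K * L)%type -> V K :=
  lext (fun p : K * L => w p.2 *: bv p.1).

Lemma linear_lslice w : linear (lslice w).
Proof. exact: linear_lext. Qed.

Lemma lslice_bv w k l : lslice w (bv (k, l)) = w k *: bv l.
Proof. exact: lext_bv. Qed.

Lemma lslice_tens w (x : V K) (y : V L) : lslice w (tens x y) = lfun w x *: y.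
Proof.
move: x y; apply: bilinear_eq_bv => [y a u v|x a u v|y a u v|x a u v|k l] /=.
- by rewrite linear_tens_l linear_lslice.
- by rewrite linear_tens_r linear_lslice.
- by rewrite linear_lfun scalerDl scalerA.
- by rewrite scalerDr !scalerA mulrC.
- by rewrite tens_bv lslice_bv lfun_bv.
Qed.

Lemma lfun_lslice (w : K -> CC) (v : L -> CC) z :
  lfun v (lslice w z) = lfun (fun p : K * L => w p.1 * v p.2) z.
Proof.
rewrite lfun_lext; apply: eq_lfun => -[k l] /=.
by rewrite (linear_scale (linear_lfun v)) lfun_bv.
Qed.

Lemma lfun_rslice (w : K -> CC) (v : L -> CC) z :
  lfun w (rslice v z) = lfun (fun p : K * L => w p.1 * v p.2) z.
Proof.
rewrite lfun_lext; apply: eq_lfun => -[k l] /=.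
by rewrite (linear_scale (linear_lfun w)) lfun_bv mulrC.
Qed.

Lemma lslice_ext (y z : V (K * L)%type) : (forall w, lslice w y = lslice w z) -> y = z.
Proof.
move=> yz; apply/malgP => -[i j].
pose w k := ((k == i)%:R : CC).
suff coef t : (lslice w t)@_j = t@_(i, j) by rewrite -!coef yz.
apply: (@linear_eq_bv _ _ (fun t => (lslice w t)@_j : CC^o) (fun t => t@_(i, j))) => [a u v||[k l]] /=.
- by rewrite linear_lslice mcoeffD mcoeffZ.
- by move=> a u v; rewrite mcoeffD mcoeffZ.
rewrite lslice_bv mcoeffZ /bv !mcoeffU /w xpair_eqE.
by case: (k == i); case: (l == j); rewrite /= ?mulr1 ?mul1r ?mul0r ?mulr0.
Qed.

End Slices.

Section SliceMaps.
Context {K L M : choiceType} (w : K -> CC).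

Lemma lslice_tmap_r (h : V L -> V M) z : linear h -> lslice w (tmap id h z) = h (lslice w z).
Proof.
move=> linh; move: z; apply: linear_eq_bv => [a x y|a x y|[k l]] /=.
- by rewrite linear_tmap linear_lslice.
- by rewrite linear_lslice linh.
- by rewrite tmap_bv lslice_tens lfun_bv lslice_bv (linear_scale linh).
Qed.

Lemma lslice_assoc3 (x : V (K * L)%type) (y : V M) :
  lslice w (assoc3 (tens x y)) = tens (lslice w x) y.
Proof.
move: x; apply: linear_eq_bv => [a u v|a u v|[k l]] /=.
- by rewrite linear_tens_l linear_assoc3 linear_lslice.
- by rewrite linear_lslice linear_tens_l.
rewrite -tens_bv assoc3_tens !lslice_tens !lfun_bv.
by rewrite (linear_scale (linear_tens_l y)).
Qed.

End SliceMaps.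

Lemma lslice_tmap_l {K L M : choiceType} (w : L -> CC) (f : V K -> V L)
    (z : V (K * M)%type) :
  linear f -> lslice w (tmap f id z) = lslice (fun k => lfun w (f (bv k))) z.
Proof.
move=> linf; move: z; apply: linear_eq_bv => [a x y|a x y|[k m]] /=.
- by rewrite linear_tmap linear_lslice.
- exact: linear_lslice.
- by rewrite tmap_bv lslice_tens lslice_bv.
Qed.

Section StarAlgebra.
Context {K : choiceType} (A : salg K).

Lemma amul_bv k l : amul A (bv k) (bv l) = smul A k l.
Proof. exact: bilext_bv. Qed.

Lemma linear_amul_l y : linear (amul A ^~ y).
Proof. exact: linear_bilext_l. Qed.

Lemma linear_amul_r x : linear (amul A x).
Proof. exact: linear_bilext_r. Qed.

End StarAlgebra.

Lemma star_hom_comp {K L M : choiceType} {A : salg K} {B : salg L} {C : salg M}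
    {F : V K -> V L} {G : V L -> V M} :
  is_star_hom A B F -> is_star_hom B C G -> is_star_hom A C (G \o F).
Proof.
by move=> [FM F1 FS] [GM G1 GS]; split=> [x y|//=|x] /=; rewrite ?FM ?GM ?F1 ?G1 ?FS ?GS.
Qed.

Definition star_character {K : choiceType} (A : salg K) (e : K -> CC) : Prop :=
  [/\ forall x y, lfun e (amul A x y) = lfun e x * lfun e y,
      lfun e (sone A) = 1 &
      forall k, lfun e (sstar A k) = conjc (e k)].

Section HopfStarAlgebra.
Context {K : choiceType} {H : hopf K}.
Hypothesis hopfH : is_hopf_star_alg H.

Lemma counit_comulL x : lslice (hcounit H) (comul H x) = x.
Proof. by have [_ [_ _ _ /(_ x)[counitL _] _]] := hopfH; apply: counitL. Qed.

Lemma counit_comulR x : rslice (hcounit H) (comul H x) = x.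
Proof. by have [_ [_ _ _ /(_ x)[_ counitR] _]] := hopfH; apply: counitR. Qed.

Lemma counit_lslice_comul w x : counit H (lslice w (comul H x)) = lfun w x.
Proof. by rewrite /counit lfun_lslice -lfun_rslice counit_comulR. Qed.

Lemma counit_star k : counit H (sstar (halg H) k) = conjc (hcounit H k).
Proof.
have [[_ _ _ astarK _] [[_ _ comul_star] _ _ _ _]] := hopfH.
set A := halg H; set T := tsalg A A.
pose e k := conjc (counit H (sstar A k)).
(* [e] is a left counit too, and a left counit agrees with the counit. *)
have slice_e z : lslice e z = astar A (lslice (hcounit H) (astar T z)).
  move: z; apply: linear_eq_bv => [||[k1 k2]].
  - exact: linear_lslice.
  - by move=> a u v /=; rewrite antilinear_astar linear_lslice antilinear_astar /= conjcK.
  rewrite lslice_bv astar_bv /= lslice_tens.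
  by rewrite (antilinear_scale (antilinear_astar A)) -(astar_bv A k2) astarK.
have e_counitL x : lslice e (comul H x) = x.
  by rewrite slice_e -comul_star counit_comulL astarK.
have := counit_lslice_comul e (bv k); rewrite e_counitL /counit !lfun_bv /e => ->.
by rewrite conjcK.
Qed.

Lemma counit_star_character : star_character (halg H) (hcounit H).
Proof.
have [_ [_ [counitM counit1] _ _ _]] := hopfH.
by split; [apply: counitM | apply: counit1 | apply: counit_star].
Qed.

End HopfStarAlgebra.

Lemma lslice_star_hom {K L : choiceType} {A : salg K} (B : salg L) {e : K -> CC} :
  star_character A e -> is_star_hom (tsalg A B) B (lslice e).
Proof.
move=> [eM e1 e_star]; split=> [||z].
- apply: bilinear_eq_bv => [y a u v|x a u v|y a u v|x a u v|[i k] [j l]] /=.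
  + by rewrite linear_amul_l linear_lslice.
  + by rewrite linear_amul_r linear_lslice.
  + by rewrite linear_lslice linear_amul_l.
  + by rewrite linear_lslice linear_amul_r.
  rewrite amul_bv /= lslice_tens -amul_bv eM !lfun_bv !lslice_bv.
  rewrite (linear_scale (linear_amul_l _ _)).
  by rewrite (linear_scale (linear_amul_r _ _)) scalerA amul_bv.
- by rewrite /= lslice_tens e1 scale1r.
move: z; apply: antilinear_eq_bv => [a u v|a u v|[k l]] /=.
- by rewrite antilinear_astar linear_lslice.
- by rewrite linear_lslice antilinear_astar.
rewrite astar_bv /= lslice_tens e_star lslice_bv.
by rewrite (antilinear_scale (antilinear_astar B)) astar_bv.
Qed.

Section ActionToMorphism.
Variables (n : nat) (G : hopf 'I_n) (I : choiceType) (H : hopf I).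
Variable al : 'I_n -> V ('I_n * I)%type.
Hypotheses (hopfG : is_hopf_star_alg G) (act_al : is_action G H al).

Definition gamma (k : 'I_n) : V I := lslice (hcounit G) (al k).

Lemma lext_gamma x : lext gamma x = lslice (hcounit G) (lext al x).
Proof. by rewrite (lext_comp _ _ _ (linear_lslice _)). Qed.

Lemma gamma_star_hom : is_star_hom (halg G) (halg H) (lext gamma).
Proof.
have [_ al_star_hom _] := act_al.
rewrite (functional_extensionality _ _ lext_gamma).
exact: star_hom_comp al_star_hom (lslice_star_hom _ (counit_star_character hopfG)).
Qed.

Hypothesis al_Lw : forall w x, tmap (Lw G w) id (lext al x) = lext al (Lw G w x).

Lemma gamma_coaction x : tmap id (lext gamma) (comul G x) = lext al x.
Proof.
apply: lslice_ext => w.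
(* equivariance moves L_w inside alpha, and eps o L_w = w *)
rewrite lslice_tmap_r; last exact: linear_lext.
rewrite lext_gamma -[lslice w (comul G x)]/(Lw G w x) -al_Lw.
rewrite lslice_tmap_l; last exact: linear_for_comp (linear_lslice w) (linear_lext _).
apply: eq_lext => -[k i] /=.
rewrite -[lfun _ _]/(counit G (lslice w (comul G (bv k)))).
by rewrite (counit_lslice_comul hopfG) lfun_bv.
Qed.

Lemma gamma_comul x : comul H (lext gamma x) = tmap (lext gamma) (lext gamma) (comul G x).
Proof.
have [_ _ al_coassoc] := act_al.
(* [Phi] is (eps (x) id (x) id) o (alpha (x) id); by the action identity,
   Delta_H o gamma = Phi o alpha. *)
pose Phi (y : V ('I_n * I)%type) := lslice (hcounit G) (assoc3 (tmap (lext al) id y)).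
have Phi_gamma z : Phi (tmap id (lext gamma) z) = tmap (lext gamma) (lext gamma) z.
  move: z; apply: linear_eq_bv => [a u v|a u v|[i j]] /=.
  - by rewrite /Phi !linear_tmap linear_assoc3 linear_lslice.
  - exact: linear_tmap.
  rewrite /Phi !tmap_bv tmap_tens; [|exact: linear_lext|by []].
  by rewrite lslice_assoc3 !lext_bv.
rewrite -Phi_gamma gamma_coaction /Phi al_coassoc lext_gamma.
by rewrite lslice_tmap_r //; exact: linear_lext.
Qed.

Lemma gamma_unique (g : 'I_n -> V I) :
  (forall x, tmap id (lext g) (comul G x) = lext al x) -> gamma = g.
Proof.
move=> g_coaction; apply: functional_extensionality => k.
rewrite /gamma -(lext_bv al) -g_coaction lslice_tmap_r; last exact: linear_lext.
by rewrite (counit_comulL hopfG) lext_bv.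
Qed.

End ActionToMorphism.

Theorem lemma4p2 (n : nat) (G : hopf 'I_n) (I : choiceType) (H : hopf I)
  (al : 'I_n -> V ('I_n * I)%type) :
  finite_quantum_group G ->
  cqg_hopf_alg H ->
  is_action G H al ->
  (forall w : 'I_n -> CC, forall x : V 'I_n,
     tmap (Lw G w) id (lext al x) = lext al (Lw G w x)) ->
  exists! g : 'I_n -> V I,
    is_hopf_star_morph G H g /\
    forall x : V 'I_n, tmap id (lext g) (comul G x) = lext al x.
Proof.
move=> [hopfG _] _ act_al al_Lw; exists (@gamma n G I al); split.
  split; first split.
  - exact: gamma_star_hom.
  - exact: gamma_comul.
  - exact: gamma_coaction.
by move=> g [_ g_coaction]; apply: gamma_unique.
Qed.
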